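(* Let $\chi=\chi_D$ be an exceptional (real, non-principal) Dirichlet character modulo $D$, let $q\ge1$ and let $a$ be an integer with $(a,q)=1$. Then $$\psi(x,q,a)\le S_W'(x,q,a)+O\left(R\log^2 x\right),$$ where $S_W'(x,q,a)=\sum_{n\le x,\ n\equiv a\ (\mathrm{mod}\ q)}\lambda'_W(n)$.
   Context: $\psi(x,q,a)=\sum_{n\le x,\ n\equiv a\ (\mathrm{mod}\ q)}\Lambda(n)$ with $\Lambda$ the von Mangoldt function. $\lambda'=\chi\ast\log$, i.e. $\lambda'(n)=\sum_{d\mid n}\chi(d)\log(n/d)$. $R=\max\{D^5,\ x e^{-(\log x)^{1/2}}\}$. $P(n)$ is the smallest prime divisor of $n$, and $\lambda'_W(n)=\lambda'(n)\mathbf 1_{P(n)>R}\,\mu(n)^2$ with $\mu$ the Möbius function. *)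

From HB Require Import structures.
From mathcomp Require Import all_boot all_order all_algebra.
From mathcomp Require Import all_classical all_reals all_analysis.
Set Implicit Arguments. Unset Strict Implicit. Unset Printing Implicit Defensive.
Import Order.TTheory GRing.Theory Num.Theory.
Local Open Scope ring_scope.
Import numFieldNormedType.Exports.
Local Open Scope classical_set_scope.
Local Open Scope ring_scope.

Section Defs.
Variable R : realType.

(* von Mangoldt: Lambda(n) = log p if n = p^k (k >= 1, p prime), else 0 *)
Definition vonMangoldt (n : nat) : R :=
  if (1 < n)%N && (size (primes n) == 1%N) then ln (pdiv n)%:R else 0.

Definition squarefreeb (n : nat) : bool :=
  (0 < n)%N && all (fun p => logn p n <= 1)%N (primes n).
Definition mobius (n : nat) : R :=
  if squarefreeb n then (-1) ^+ size (primes n) else 0.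

Definition real_dirichlet_char (D : nat) (chi : nat -> R) : Prop :=
  [/\ chi 1%N = 1,
      (forall m n, chi (m * n)%N = chi m * chi n),
      (forall n, chi (n + D)%N = chi n) &
      (forall n, (chi n == 0) = ~~ coprime n D)].

Definition nonprincipal (D : nat) (chi : nat -> R) : Prop :=
  exists n, coprime n D /\ chi n != 1.

Definition L_series_converges_to (chi : nat -> R) (s l : R) : Prop :=
  series (fun k : nat => chi k.+1 * (k.+1)%:R `^ (- s)) @ \oo --> l.

Definition exceptional_char (c : R) (D : nat) (chi : nat -> R) : Prop :=
  [/\ real_dirichlet_char D chi, nonprincipal D chi &
      exists beta : R, 1 - c / ln D%:R <= beta /\ beta < 1 /\
                       L_series_converges_to chi beta 0].

Definition lambda' (chi : nat -> R) (n : nat) : R :=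
  \sum_(d <- divisors n) chi d * ln (n%:R / d%:R).

Definition Rpar (D : nat) (x : R) : R :=
  Num.max (D%:R ^+ 5) (x * expR (- Num.sqrt (ln x))).

Definition lambda'_W (chi : nat -> R) (D : nat) (x : R) (n : nat) : R :=
  lambda' chi n * (if Rpar D x < (pdiv n)%:R then 1 else 0) * mobius n ^+ 2.

Definition sum_ap (f : nat -> R) (x : R) (q : nat) (a : int) : R :=
  \sum_(1 <= n < (Num.truncn x).+1 | (n%:Z == a %[mod q%:Z])%Z) f n.

Definition psi (x : R) (q : nat) (a : int) : R := sum_ap vonMangoldt x q a.

Definition S'_W (chi : nat -> R) (D : nat) (x : R) (q : nat) (a : int) : R :=
  sum_ap (lambda'_W chi D x) x q a.

End Defs.

From HB Require Import structures.
From mathcomp Require Import all_boot all_order all_algebra.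
From mathcomp Require Import all_classical all_reals all_analysis.
From mathcomp Require Import cyclic ring lra zify.
Set Implicit Arguments.
Unset Strict Implicit.
Unset Printing Implicit Defensive.

Import Order.TTheory GRing.Theory Num.Theory.
Local Open Scope ring_scope.

(* For [n <= x], [Lambda n] and [lambda'_W n] agree at every prime
   [p > R = Rpar D x], where both equal [log p].  Once [log x >= 4] we have [R >= sqrt x], so [lambda'_W]
   vanishes at every composite [n <= x] (its least prime factor is at most
   [sqrt n <= R]).  Hence [psi - S'_W] is at most [log x] times the number of
   primes [p <= R] plus the number of prime powers [p ^ e <= x] with [e >= 2],
   i.e. [O(R log^2 x)].  When [log x < 4], [x] is bounded, [R >= x / e^2], and
   the trivial bound [|lambda' n| <= n log n] (from [|chi| <= 1]) suffices. *)

Section RealCharacter.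
Variables (R : realType) (D : nat) (chi : nat -> R).
Hypothesis chi_real : real_dirichlet_char D chi.

Lemma real_char1 : chi 1%N = 1.
Proof. by case: chi_real. Qed.

Lemma real_char_modn m : chi m = chi (m %% D)%N.
Proof.
case: chi_real => _ _ chiD _; rewrite {1}(divn_eq m D).
elim: (m %/ D)%N => [|k IH]; first by rewrite mul0n add0n.
by rewrite mulSnr addnAC chiD.
Qed.

Lemma real_charX n k : chi (n ^ k)%N = chi n ^+ k.
Proof.
case: chi_real => chi1 chiM _ _; elim: k => [|k IH]; first by rewrite expn0 expr0.
by rewrite expnS chiM IH exprS.
Qed.

Lemma nonprincipal_modulus_gt0 : nonprincipal D chi -> (0 < D)%N.
Proof.
case: chi_real => chi1 _ _ _ [m []]; case: D => // /eqP.
by rewrite gcdn0 => ->; rewrite chi1 eqxx.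
Qed.

(* Euler's theorem makes [chi n] a root of unity whenever it is nonzero. *)
Lemma real_char_norm_le1 : nonprincipal D chi -> forall n, `|chi n| <= 1.
Proof.
move=> /nonprincipal_modulus_gt0 D_gt0 n.
have [->|chin_nz] := eqVneq (chi n) 0; first by rewrite normr0 ler01.
have coprime_nD : coprime n D.
  by case: chi_real => _ _ _ chi0; rewrite -[coprime _ _]negbK -chi0 chin_nz.
have /(congr1 Num.norm) : chi n ^+ totient D = 1.
  by rewrite -real_charX real_char_modn Euler_exp_totient // -real_char_modn real_char1.
rewrite normrX normr1 => /eqP.
by rewrite pexpr_eq1 ?totient_gt0 // => /eqP ->.
Qed.

End RealCharacter.

Section ArithmeticFunctions.
Variable R : realType.

Lemma vonMangoldt_le_ln n : (0 < n)%N -> vonMangoldt R n <= ln n%:R.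
Proof.
move=> n_gt0; rewrite /vonMangoldt; case: ifP => _.
  by rewrite ler_ln ?posrE ?ltr0n ?pdiv_gt0 // ler_nat pdiv_leq.
by apply: ln_ge0; rewrite ler1n.
Qed.

Lemma vonMangoldt_prime p : prime p -> vonMangoldt R p = ln p%:R.
Proof.
move=> p_pr; rewrite /vonMangoldt primes_prime // prime_gt1 //=.
by rewrite /pdiv primes_prime.
Qed.

Lemma divisors_prime p : prime p -> perm_eq (divisors p) [:: 1%N; p].
Proof.
move=> p_pr; apply: uniq_perm; first exact: divisors_uniq.
  by rewrite /= inE andbT neq_ltn prime_gt1 ?orbT.
move=> d; rewrite -dvdn_divisors ?prime_gt0 // !inE.
apply/idP/idP => [|/orP[] /eqP ->]; rewrite ?dvd1n ?dvdnn //.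
by case/primeP: p_pr => _ p_div /p_div; rewrite orbC.
Qed.

Lemma lambda'_prime (chi : nat -> R) p :
  chi 1%N = 1 -> prime p -> lambda' chi p = ln p%:R.
Proof.
move=> chi1 p_pr; rewrite /lambda' (perm_big _ (divisors_prime p_pr)).
rewrite !big_cons big_nil chi1 divr1 divff ?pnatr_eq0 -?lt0n ?prime_gt0 //.
by rewrite ln1 mulr0 mul1r /= !addr0.
Qed.

Lemma mobius_prime p : prime p -> mobius R p = -1.
Proof.
move=> p_pr; rewrite /mobius /squarefreeb primes_prime //= prime_gt0 //.
by rewrite logn_prime // eqxx expr1.
Qed.

Lemma mobius_norm_le1 n : `|mobius R n| <= 1.
Proof.
rewrite /mobius; case: ifP => _; last by rewrite normr0 ler01.
by rewrite normrX normrN1 expr1n.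
Qed.

Lemma size_divisors_le n : (0 < n)%N -> (size (divisors n) <= n)%N.
Proof.
move=> n_gt0; rewrite -[X in (_ <= X)%N](size_iota 1 n).
apply: uniq_leq_size; first exact: divisors_uniq.
move=> d; rewrite -dvdn_divisors // mem_iota => d_dvd_n.
by have := dvdn_leq n_gt0 d_dvd_n; have := dvdn_gt0 n_gt0 d_dvd_n; lia.
Qed.

Lemma lambda'_norm_le (chi : nat -> R) n :
  (forall d, `|chi d| <= 1) -> (0 < n)%N -> `|lambda' chi n| <= n%:R * ln n%:R.
Proof.
move=> chi_le1 n_gt0; rewrite /lambda'.
apply: le_trans (ler_norm_sum _ _ _) _.
apply: (@le_trans _ _ (\sum_(d <- divisors n) ln (n%:R : R))).
  rewrite !big_seq; apply: ler_sum => d; rewrite -dvdn_divisors // => d_dvd_n.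
  have d_gt0 : (0 : R) < d%:R by rewrite ltr0n (dvdn_gt0 n_gt0).
  have ge1 : 1 <= (n%:R : R) / d%:R.
    by rewrite ler_pdivlMr // mul1r ler_nat; exact: dvdn_leq.
  have len : (n%:R : R) / d%:R <= n%:R.
    by rewrite ler_pdivrMr // ler_peMr ?ler0n // ler1n (dvdn_gt0 n_gt0).
  rewrite normrM (ger0_norm (ln_ge0 ge1)) -[X in _ <= X]mul1r.
  apply: ler_pM; rewrite ?normr_ge0 ?ln_ge0 ?chi_le1 //.
  by rewrite ler_ln ?posrE ?ltr0n //; apply: lt_le_trans ge1.
rewrite big_const_seq count_predT iter_addr_0 -[_ *+ size _]mulr_natl.
by apply: ler_wpM2r; rewrite ?ln_ge0 ?ler1n // ler_nat size_divisors_le.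
Qed.

Lemma pdiv_sqr_le n : (0 < n)%N -> ~~ prime n -> (pdiv n ^ 2 <= n)%N.
Proof.
move=> n_gt0 n_npr; rewrite leqNgt; apply: contra n_npr.
exact: ltn_pdiv2_prime.
Qed.

Lemma composite_pdiv_le (r : R) n :
  0 <= r -> (0 < n)%N -> ~~ prime n -> n%:R <= r ^+ 2 -> (pdiv n)%:R <= r.
Proof.
move=> r_ge0 n_gt0 n_npr n_le; rewrite -(ler_pXn2r (_ : 0 < 2)%N) ?nnegrE ?ler0n //.
by apply: le_trans n_le; rewrite -natrX ler_nat pdiv_sqr_le.
Qed.

End ArithmeticFunctions.

Definition prime_power (n : nat) : bool := (1 < n)%N && (size (primes n) == 1%N).

Lemma prime_power_pdivE n : prime_power n -> n = (pdiv n ^ logn (pdiv n) n)%N.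
Proof.
case/andP=> n_gt1; case def_pr: (primes n) => [|p []] // _.
have -> : pdiv n = p by rewrite /pdiv def_pr.
rewrite -p_part part_pnat_id //; have := pnat_pi (ltnW n_gt1).
by rewrite (@eq_pnat _ p) // => r; rewrite !inE /= def_pr inE.
Qed.

Lemma sum_bool_count (I : Type) (r : seq I) (b : pred I) :
  (\sum_(i <- r) (b i : nat))%N = count b r.
Proof. by rewrite -sumn_count sumnE big_map. Qed.

Lemma count_iota_le_size (P : pred nat) m n (s : seq nat) :
  (forall k, (m <= k < m + n)%N -> P k -> k \in s) -> (count P (iota m n) <= size s)%N.
Proof.
move=> Ps; rewrite -size_filter; apply: uniq_leq_size; first exact/filter_uniq/iota_uniq.
by move=> k; rewrite mem_filter mem_iota => /andP[Pk /Ps]; apply.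
Qed.

Lemma count_iota_le_bound (P : pred nat) n M :
  (forall k, P k -> k <= M)%N -> (count P (iota 1 n) <= M)%N.
Proof.
move=> PM; rewrite -[M in (_ <= M)%N](size_iota 1).
apply: count_iota_le_size => k /andP[k_gt0 _] /PM k_le.
by rewrite mem_iota k_gt0 add1n ltnS.
Qed.

(* A prime power [p ^ e <= n] has [e <= log_2 n], so it is determined by a pair
   in [[0, B] x [0, log_2 n]] once its base is at most [B]. *)
Lemma count_prime_power_le n B :
  (forall k, (k <= n)%N -> prime_power k -> ~~ prime k -> (pdiv k <= B)%N) ->
  (count (fun k => prime_power k && ~~ prime k) (iota 1 n)
    <= B.+1 * (trunc_log 2 n).+1)%N.
Proof.
move=> pdivB; set t := trunc_log 2 n.
apply: (@leq_trans (size [seq b ^ j | b <- iota 0 B.+1, j <- iota 0 t.+1])%N).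
  apply: count_iota_le_size => k /andP[_ k_le] /andP[k_pp k_npr].
  rewrite add1n ltnS in k_le.
  set p := pdiv k; set e := logn p k.
  have def_k : k = (p ^ e)%N := prime_power_pdivE k_pp.
  have p_pr : prime p by rewrite pdiv_prime // (andP k_pp).1.
  apply/allpairsP; exists (p, e); rewrite !mem_iota !add0n !ltnS /=.
  split=> //; first exact: pdivB.
  apply: trunc_log_max => //; apply: leq_trans k_le; rewrite [X in (_ <= X)%N]def_k.
  by case: e {def_k} => // e; rewrite leq_exp2r // prime_gt1.
by rewrite size_allpairs !size_iota.
Qed.

Section RparBounds.
Variables (R : realType) (D : nat) (x : R).

Lemma Rpar_ge0 : 0 <= Rpar D x.
Proof. by rewrite /Rpar le_max exprn_ge0 ?ler0n. Qed.

Lemma Rpar_ge : x * expR (- Num.sqrt (ln x)) <= Rpar D x.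
Proof. by rewrite /Rpar le_max lexx orbT. Qed.

(* [sqrt (ln x) <= ln x / 2] once [ln x >= 4], so [R >= x exp (- ln x / 2) = sqrt x]. *)
Lemma Rpar_sqr_ge : 0 < x -> 4 <= ln x -> x <= Rpar D x ^+ 2.
Proof.
move=> x_gt0 lnx_ge4; set L := ln x in lnx_ge4 *.
have sqrtL_ge2 : 2 <= Num.sqrt L.
  have := @ler_wsqrtr _ (2 ^+ 2) L; rewrite sqrtr_sqr ger0_norm //.
  by apply; rewrite expr2; lra.
have sqrtL_le : Num.sqrt L <= L / 2.
  rewrite ler_pdivlMr // -{2}(@sqr_sqrtr _ L) ?expr2; last lra.
  by rewrite ler_wpM2l ?sqrtr_ge0.
set y := expR (L / 2).
have y_sqr : y ^+ 2 = x by rewrite /y -expRM_natl mulrC divfK // lnK ?posrE.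
have y_le : y <= Rpar D x.
  apply: le_trans Rpar_ge; rewrite -[in X in X * _]y_sqr expr2 -mulrA.
  rewrite -[X in X <= _]mulr1 ler_wpM2l ?expR_ge0 // -expRD.
  by rewrite -[X in X <= expR _]expR0 ler_expR -/L; lra.
by rewrite -{1}y_sqr !expr2 ler_pM ?expR_ge0.
Qed.

End RparBounds.

Lemma trunc_log2_truncn_le (R : realType) (x : R) :
  1 <= x -> (trunc_log 2 (Num.truncn x))%:R * ln 2 <= ln x.
Proof.
move=> x_ge1; set t := trunc_log 2 _.
have : (2 ^ t <= Num.truncn x)%N by apply: trunc_logP; rewrite // truncn_gt0.
rewrite truncn_ge_nat ?(le_trans ler01) // natrX => two_t_le.
by rewrite mulr_natl -lnXn // ler_ln ?posrE ?exprn_gt0 // (lt_le_trans ltr01).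
Qed.

Section PsiMinusSW.
Variables (R : realType) (chi : nat -> R) (D : nat) (x : R).
Hypothesis x_ge2 : 2 <= x.

Let x_ge1 : 1 <= x. Proof. by apply: le_trans x_ge2; rewrite ler1n. Qed.
Let x_gt0 : 0 < x. Proof. exact: lt_le_trans ltr01 x_ge1. Qed.
Let truncn_x_le : (Num.truncn x)%:R <= x. Proof. by rewrite truncn_le ltW. Qed.

Let ln_le_lnx n : (0 < n)%N -> n%:R <= x -> ln (n%:R : R) <= ln x.
Proof. by move=> n_gt0 n_le; rewrite ler_ln ?posrE ?ltr0n. Qed.

(* Primes above [R] cancel, and composites [n <= x] are killed by [P(n) <= sqrt n <= R]. *)
Lemma vonMangoldt_sub_lambda'_W_le :
  chi 1%N = 1 -> x <= Rpar D x ^+ 2 -> forall n, (0 < n)%N -> n%:R <= x ->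
  vonMangoldt R n - lambda'_W chi D x n <=
    ln x *+ ((prime n && (n%:R <= Rpar D x)) + (prime_power n && ~~ prime n)).
Proof.
move=> chi1 x_le n n_gt0 n_le; have lnn_le := ln_le_lnx n_gt0 n_le.
have [n_pr|n_npr] := boolP (prime n).
  rewrite vonMangoldt_prime // /lambda'_W lambda'_prime // mobius_prime //.
  rewrite pdiv_id // sqrrN expr1n mulr1 andbF addn0 /=.
  by case: ltrP => /= _; rewrite ?mulr1 ?subrr ?mulr0 ?subr0 ?mulr1n.
have pdiv_le : ((pdiv n)%:R : R) <= Rpar D x.
  by rewrite composite_pdiv_le ?Rpar_ge0 // (le_trans n_le).
rewrite /lambda'_W ltNge pdiv_le mulr0 mul0r subr0 /= andbT.
rewrite /vonMangoldt -/(prime_power n); case: prime_power; last by rewrite mulr0n.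
by apply: le_trans lnn_le; rewrite ler_ln ?posrE ?ltr0n ?pdiv_gt0 // ler_nat pdiv_leq.
Qed.

Lemma vonMangoldt_sub_lambda'_W_le_trivial :
  (forall d, `|chi d| <= 1) -> forall n, (0 < n)%N -> n%:R <= x ->
  vonMangoldt R n - lambda'_W chi D x n <= (1 + x) * ln x.
Proof.
move=> chi_le1 n n_gt0 n_le; have lnn_le := ln_le_lnx n_gt0 n_le.
have lnn_ge0 : 0 <= ln (n%:R : R) by rewrite ln_ge0 // ler1n.
have lambda'_W_le : `|lambda'_W chi D x n| <= `|lambda' chi n|.
  rewrite /lambda'_W !normrM -mulrA ler_piMr // mulr_ile1 ?normr_ge0 //.
    by case: ifP; rewrite ?normr1 ?normr0.
  by rewrite mulr_ile1 ?normr_ge0 ?mobius_norm_le1.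
have nlnn_le : n%:R * ln (n%:R : R) <= x * ln x by rewrite ler_pM ?ler0n.
have := lambda'_norm_le chi_le1 n_gt0; have := vonMangoldt_le_ln R n_gt0.
have := ler_norm (- lambda'_W chi D x n); rewrite normrN; lra.
Qed.

Lemma psi_sub_S'_W_le_sum q a (g : nat -> R) :
  (forall n, (0 < n)%N -> n%:R <= x -> vonMangoldt R n - lambda'_W chi D x n <= g n) ->
  (forall n, 0 <= g n) ->
  psi x q a - S'_W chi D x q a <= \sum_(1 <= n < (Num.truncn x).+1) g n.
Proof.
move=> diff_le g_ge0; rewrite /psi /S'_W /sum_ap -sumrB big_mkcond /=.
apply: ler_sum_nat => n /andP[n_gt0 n_lt]; case: ifP => _ //.
by apply: diff_le => //; apply: le_trans truncn_x_le; rewrite ler_nat -ltnS.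
Qed.

Lemma psi_sub_S'_W_le_large q a :
  chi 1%N = 1 -> 4 <= ln x ->
  psi x q a - S'_W chi D x q a <= (3 + 2 / ln 2) * (Rpar D x * ln x ^+ 2).
Proof.
move=> chi1 lnx_ge4; have x_le := Rpar_sqr_ge D x_gt0 lnx_ge4.
apply: le_trans (psi_sub_S'_W_le_sum q a (vonMangoldt_sub_lambda'_W_le chi1 x_le) _) _.
  by move=> n; rewrite mulrn_wge0 // ln_ge0 // x_ge1.
have Rp_ge0 := Rpar_ge0 D x; have ln2_gt0 : (0 : R) < ln 2 by rewrite ln_gt0 ?ltr1n.
set L := ln x in lnx_ge4 x_le *; set Rp := Rpar D x in x_le Rp_ge0 *.
set N := Num.truncn x; set k := (ln 2)^-1.
have k_gt0 : 0 < k by rewrite invr_gt0.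
have Rp_ge1 : 1 <= Rp by move: x_ge1; nra.
rewrite sumrMnr big_split /= !sum_bool_count /index_iota subSS subn0.
set cp := count _ _; set cpp := count _ _.
have cp_le : cp%:R <= Rp.
  apply: le_trans (_ : (Num.truncn Rp)%:R <= Rp); last by rewrite truncn_le.
  by rewrite ler_nat; apply: count_iota_le_bound => n /andP[_ n_le]; rewrite truncn_ge_nat.
have cpp_le : cpp%:R <= (Rp + 1) * (L * k + 1).
  apply: le_trans (_ : ((Num.truncn Rp).+1 * (trunc_log 2 N).+1)%:R <= _).
    rewrite ler_nat; apply: count_prime_power_le => n n_le n_pp n_npr.
    rewrite truncn_ge_nat // composite_pdiv_le // ?(andP n_pp).1 ?(ltnW (andP n_pp).1) //.
    by apply: le_trans x_le; apply: le_trans truncn_x_le; rewrite ler_nat.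
  rewrite natrM -!natr1; apply: ler_pM; rewrite ?addr_ge0 // lerD2r.
    by rewrite truncn_le.
  by rewrite ler_pdivlMr // trunc_log2_truncn_le.
have count_le : cp%:R + cpp%:R <= Rp + 2 * Rp * ((k + 1) * L).
  apply: lerD => //; apply: le_trans cpp_le _; apply: ler_pM; nra.
have L_ge0 : 0 <= L by lra.
rewrite -[L *+ _]mulr_natr natrD; apply: le_trans (ler_wpM2l L_ge0 count_le) _.
have : Rp * L <= Rp * L ^+ 2 by rewrite ler_wpM2l // expr2 ler_peMl //; lra.
rewrite expr2; nra.
Qed.

Lemma psi_sub_S'_W_le_small q a :
  (forall d, `|chi d| <= 1) -> ln x <= 4 ->
  psi x q a - S'_W chi D x q a <=
    expR 2 * (1 + expR 4) / ln 2 * (Rpar D x * ln x ^+ 2).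
Proof.
move=> chi_le1 lnx_le4.
have lnx_ge : ln 2 <= ln x by rewrite ler_ln ?posrE.
have ln2_gt0 : (0 : R) < ln 2 by rewrite ln_gt0 ?ltr1n.
apply: le_trans (psi_sub_S'_W_le_sum q a (vonMangoldt_sub_lambda'_W_le_trivial chi_le1) _) _.
  by move=> _; rewrite mulr_ge0 ?ln_ge0 // addr_ge0 // ltW.
rewrite sumr_const_nat subn1 /= -[(1 + x) * _ *+ _]mulr_natl.
have x_le : x <= expR 4 by rewrite -(lnK x_gt0) ler_expR.
have x_le_Rp : x <= expR 2 * Rpar D x.
  apply: le_trans (ler_wpM2l (expR_ge0 _) (Rpar_ge D x)).
  rewrite mulrCA -expRD; apply: ler_peMr; first exact: ltW.
  rewrite -[X in X <= _]expR0 ler_expR subr_ge0.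
  have := @ler_wsqrtr _ (ln x) (2 ^+ 2); rewrite sqrtr_sqr ger0_norm //.
  by apply; rewrite expr2; lra.
set L := ln x in lnx_le4 lnx_ge *; set Rp := Rpar D x in x_le_Rp *.
set k := (ln 2)^-1; have kL_ge1 : 1 <= k * L by rewrite ler_pdivlMl // mulr1.
have L_ge0 : 0 <= L by lra.
have e4_ge0 : 0 <= 1 + expR 4 :> R := addr_ge0 ler01 (expR_ge0 _).
apply: le_trans (_ : expR 2 * Rp * ((1 + expR 4) * L) <= _).
  apply: ler_pM; first exact: ler0n.
  - by rewrite mulr_ge0 // addr_ge0 // ltW.
  - exact: le_trans truncn_x_le x_le_Rp.
  - by rewrite ler_wpM2r // lerD2l.
rewrite (_ : _ * (Rp * L ^+ 2) = expR 2 * Rp * ((1 + expR 4) * L) * (k * L)); last by ring.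
by rewrite ler_peMr // !mulr_ge0 ?expR_ge0 ?Rpar_ge0.
Qed.

End PsiMinusSW.

Theorem mainTheorem8 (R : realType) (c : R) (hc : 0 < c) :
  exists C : R, 0 < C /\
  forall (D : nat) (chi : nat -> R) (q : nat) (a : int) (x : R),
    exceptional_char c D chi ->
    (1 <= q)%N -> coprimez a q%:Z -> 2 <= x ->
    psi x q a <= S'_W chi D x q a + C * (Rpar D x * ln x ^+ 2).
Proof.
have ln2_gt0 : (0 : R) < ln 2 by rewrite ln_gt0 ?ltr1n.
set C_large : R := 3 + 2 / ln 2; set C_small : R := expR 2 * (1 + expR 4) / ln 2.
have C_large_gt0 : 0 < C_large by rewrite addr_gt0 ?divr_gt0.
have C_small_gt0 : 0 < C_small by rewrite !mulr_gt0 ?expR_gt0 ?addr_gt0 ?invr_gt0 ?expR_gt0.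
exists (C_large + C_small); split; first exact: addr_gt0.
move=> D chi q a x [chi_real chi_np _] _ _ x_ge2; rewrite -lerBlDl.
have RL_ge0 : 0 <= Rpar D x * ln x ^+ 2 by rewrite mulr_ge0 ?Rpar_ge0 ?sqr_ge0.
have [lnx_ge4|/ltW lnx_le4] := leP 4 (ln x).
- apply: le_trans (psi_sub_S'_W_le_large D x_ge2 q a (real_char1 chi_real) lnx_ge4) _.
  by rewrite ler_wpM2r // lerDl ltW.
- apply: le_trans (psi_sub_S'_W_le_small D x_ge2 q a (real_char_norm_le1 chi_real chi_np) lnx_le4) _.
  by rewrite ler_wpM2r // lerDr ltW.
Qed.
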